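(* Let $u=s_{i_1}\cdots s_{i_l}$ and $v=s_{j_1}\cdots s_{j_m}$ (both nonempty) be reduced words for glides in $\hat S_n$, $v$ of offset $k_2$, with $vu$ reduced, and let $\alpha_1,\dots,\alpha_n\in\mathbb R$ satisfy $\alpha_i<\alpha_j$ whenever $i\triangleleft j$ in the wiring diagram of $v|u$. Let $\tilde v=\rho^{-k_2}(v)$ with reduced word $s_{j_1-k_2}\cdots s_{j_m-k_2}$, and let $(t_1,\dots,t_n)$, $(t'_1,\dots,t'_n)$ be representatives of $t(u)$ and $t(\tilde v)$. Let $b\neq c$ be real numbers in the same connected component of $\mathbb R\setminus\{\alpha_1,\dots,\alpha_n\}$ with $f(b)=f(c)$ where $f(t)=\prod_j(t-\alpha_j)$ (a $1$-soliton), and $B_j=\frac{b-\alpha_j}{c-\alpha_j}$. Then the speed $$p=\frac{t'_1\log B_1+\dots+t'_n\log B_n}{t_1\log B_1+\dots+t_n\log B_n}$$ is positive.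
   Context: $\hat S_n$: generators $s_0,\dots,s_{n-1}$ (indices mod $n$), relations $s_i^2=1$, $s_is_js_i=s_js_is_j$ if $i-j\equiv\pm1$, $s_is_j=s_js_i$ if $i-j\not\equiv0,\pm1$; $\rho$ is the automorphism $s_i\mapsto s_{i+1}$. $\phi:\hat S_n\to S_n$, $s_i\mapsto(i\ i+1)$, $s_0\mapsto(1\ n)$; a glide of offset $k$ is $g$ with $\phi(g)(j)\equiv j+k\pmod n$. Wiring diagram: letters drawn left to right on a cylinder with wires in positions $1,\dots,n$ (mod $n$), $s_i$ a crossing of positions $i,i+1$ ($s_0$: $n$ and $1$); the upper wire of $s_i$ passes from position $i+1$ to $i$ (for $s_0$ from $1$ to $n$). In the diagram of $v|u$, wire $i$ is the wire in position $i$ at the cut between $v$ and $u$; $i\triangleleft j$ means wires $i,j$ cross with $j$ the upper wire. Trajectory of a glide $g$ with a reduced word: lift the diagram of $|g$ to the universal cover (integer positions, wires labelled by starting position); a chamber with set $S$ of underlying wire labels has label $(\mathbf s_i)$, $\mathbf s_i=\lceil\max\{b\in S:b\equiv i\bmod n\}/n\rceil$; $t(g)\in\mathbb Z^n/\mathbb Z(1,\dots,1)$ is the label of the chamber directly above wire $1$ at the right end minus that at the left end. *)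

From HB Require Import structures.
From Stdlib Require Import Relations.
From mathcomp Require Import all_boot all_order all_algebra.
From mathcomp Require Import reals exp.
Set Implicit Arguments. Unset Strict Implicit. Unset Printing Implicit Defensive.
Import Order.TTheory GRing.Theory Num.Theory.
Local Open Scope ring_scope.

(* Words in the affine symmetric group \hat S_n: a word is a sequence of
   integers, the letter a standing for the generator s_(a mod n). *)

Inductive gstep (n : nat) : seq int -> seq int -> Prop :=
| gs_rep x y (a a' : int) :
    (a = a' %[mod n%:Z])%Z -> gstep n (x ++ a :: y) (x ++ a' :: y)
| gs_sq x y (a : int) : gstep n (x ++ a :: a :: y) (x ++ y)
| gs_braid x y (a b : int) :
    ((a - b = 1 %[mod n%:Z])%Z \/ (a - b = -1 %[mod n%:Z])%Z) ->
    gstep n (x ++ [:: a; b; a] ++ y) (x ++ [:: b; a; b] ++ y)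
| gs_comm x y (a b : int) :
    ~ (a - b = 0 %[mod n%:Z])%Z -> ~ (a - b = 1 %[mod n%:Z])%Z ->
    ~ (a - b = -1 %[mod n%:Z])%Z ->
    gstep n (x ++ a :: b :: y) (x ++ b :: a :: y).

Definition weq (n : nat) : seq int -> seq int -> Prop :=
  clos_refl_sym_trans _ (gstep n).

Definition reduced (n : nat) (w : seq int) : Prop :=
  forall w', weq n w w' -> (size w <= size w')%N.

(** The crossing of positions p, p+1 for all p = a (mod n) on the universal
    cover Z of the cylinder; it is also the affine lift of phi(s_a). *)
Definition tau (n : nat) (a : int) (p : int) : int :=
  if (p == a %[mod n%:Z])%Z then p + 1
  else if (p == a + 1 %[mod n%:Z])%Z then p - 1 else p.

(** Reduced mod n this is
    phi(g) = phi(s_(i1)) ... phi(s_(il)) (usual composition of permutations);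
    it is also the state of the lifted wiring diagram of w at its right end:
    the wire in position p has starting position (label) phi w p. *)
Definition phi (n : nat) (w : seq int) : int -> int :=
  foldr (fun a f => fun p => tau n a (f p)) id w.

Definition is_glide (n : nat) (w : seq int) (k : int) : Prop :=
  forall j : int, (phi n w j = j + k %[mod n%:Z])%Z.

(** i <| j in the (cylindrical) wiring diagram of v|u : wires i and j
    (labelled by their positions 1..n at the cut, taken mod n) cross, j being
    the upper wire, i.e. the one passing from position p+1 to p at a crossing
    of letter a, p = a (mod n).  Before letter number t of vu, the wire in
    position p has starting label phi (take t (v++u)) p, hence cut label
    phi (rev v) (phi (take t (v++u)) p). *)
Definition tri (n : nat) (v u : seq int) (i j : int) : Prop :=
  exists t : nat, (t < size (v ++ u))%N /\
  exists p : int, (p = nth 0 (v ++ u) t %[mod n%:Z])%Z /\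
    (phi n (rev v) (phi n (take t (v ++ u)) p) = i %[mod n%:Z])%Z /\
    (phi n (rev v) (phi n (take t (v ++ u)) (p + 1)) = j %[mod n%:Z])%Z.

Definition ceil_div (M : int) (n : nat) : int := - ((- M) %/ n%:Z)%Z.

(** L is the label of the chamber lying directly above the wire in position e
    in a lifted diagram column whose state is S (position -> wire label):
    the underlying wires are {S p | p <= e} and
    L_i = ceil (max {b in that set | b = i mod n} / n), i = 1..n. *)
Definition chamber_label (n : nat) (S : int -> int) (e : int)
    (L : nat -> int) : Prop :=
  forall i : nat, (1 <= i <= n)%N ->
  exists M : int,
    (exists p, p <= e /\ S p = M) /\ (M = i%:Z %[mod n%:Z])%Z /\
    (forall p, p <= e -> (S p = i%:Z %[mod n%:Z])%Z -> S p <= M) /\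
    L i = ceil_div M n.

(** (t_1,...,t_n) is a representative of t(g) in Z^n / Z(1,...,1), g given by
    the reduced word w: label of the chamber directly above wire 1 at the right
    end minus that at the left end, up to adding a constant vector. *)
Definition traj_rep (n : nat) (w : seq int) (t : nat -> int) : Prop :=
  exists (e : int) (Lr Ll : nat -> int) (c : int),
    phi n w e = 1 /\ chamber_label n (phi n w) e Lr /\
    chamber_label n id 1 Ll /\
    forall i : nat, (1 <= i <= n)%N -> t i = Lr i - Ll i + c.

From HB Require Import structures.
From mathcomp Require Import all_boot all_order all_algebra.
From mathcomp Require Import reals exp zify ring.

(** For a glide [w], the displacement [disp w x] of the wire starting at [x]
    is constant modulo [n], and the trajectory [t(w)] is represented by
    [(disp w 1 - disp w i) / n].  At every crossing of [v|u] the upper wire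
    has the larger [alpha], so two wires never cross twice: the wire with the larger displacement has the
    smaller [alpha], and the displacement is not constant, since the first
    letter of [u] (resp. [v]) swaps two wires for good.  With
    [lam j = (c - b) ln B_j], the soliton condition gives [\sum lam = 0], and
    [lam j > 0] exactly when [alpha j] lies above [b] and [c].  So [lam] is
    sorted against the displacement, which forces [(c - b) \sum t_j ln B_j > 0]
    for [u] and for [tilde v] alike. *)

Set Implicit Arguments.
Unset Strict Implicit.
Unset Printing Implicit Defensive.

Import Order.TTheory GRing.Theory Num.Theory.
Local Open Scope ring_scope.

Lemma sumr_le0_eq0 (R : numDomainType) (I : eqType) (r : seq I) (F : I -> R) :
  {in r, forall i, F i <= 0} -> \sum_(i <- r) F i = 0 -> {in r, forall i, F i = 0}.
Proof.
move=> F_le0 /eqP; rewrite -oppr_eq0 -sumrN big_seq psumr_eq0 => [/allP F0 i ir|i ir].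
- by apply/eqP; rewrite -oppr_eq0; exact: implyP (F0 i ir) ir.
- by rewrite oppr_ge0 F_le0.
Qed.

Lemma sumr_sorted_lt0 (R : realDomainType) (I : eqType) (r : seq I) (lam x : I -> R) :
  \sum_(i <- r) lam i = 0 -> {in r, forall i, lam i != 0} ->
  {in r &, forall i j, 0 < lam i -> lam j < 0 -> x i <= x j} ->
  ~ {in r &, forall i j, x i = x j} ->
  \sum_(i <- r) lam i * x i < 0.
Proof.
move=> lam_sum0 lam_neq0 x_sorted x_nonconst.
have /hasP[i0 i0r lam_i0] : has (fun i => 0 < lam i) r.
  apply: contraT => /hasPn lam_le0; elim: x_nonconst => i j ir _.
  have lam0 : {in r, forall i, lam i = 0}.
    by apply: sumr_le0_eq0 lam_sum0 => k kr; rewrite leNgt lam_le0.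
  by have := lam_neq0 i ir; rewrite lam0 ?eqxx.
(* [m] separates the [x i] of positive weight from those of negative weight;
   as [lam] sums to 0, replacing [x] by [x - m] makes every term nonpositive. *)
set m := \big[Num.max/x i0]_(i <- r | 0 < lam i) x i.
have x_le_m : {in r, forall i, 0 < lam i -> x i <= m} by move=> i; exact: le_bigmax_seq.
have m_le_x : {in r, forall j, lam j < 0 -> m <= x j}.
  move=> j jr lam_j; rewrite /m big_seq_cond.
  by apply: bigmax_le => [|i /andP[ir lam_i]]; exact: x_sorted.
have term_le0 : {in r, forall i, lam i * (x i - m) <= 0}.
  move=> i ir; have [lam_lt0|lam_gt0|->] := ltgtP (lam i) 0; last by rewrite mul0r.
  - by rewrite mulr_le0_ge0 ?(ltW lam_lt0) // subr_ge0 m_le_x.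
  - by rewrite mulr_ge0_le0 ?(ltW lam_gt0) // subr_le0 x_le_m.
have -> : \sum_(i <- r) lam i * x i = \sum_(i <- r) lam i * (x i - m).
  rewrite (eq_bigr _ (fun i _ => mulrBr _ _ _)) sumrB -mulr_suml.
  by rewrite lam_sum0 mul0r subr0.
rewrite lt_neqAle big_seq sumr_le0 ?andbT => [|i]; last exact: term_le0.
apply/eqP; rewrite -big_seq => /(sumr_le0_eq0 term_le0) terms0.
have x_eq_m : {in r, forall i, x i = m}.
  move=> i ir; have /eqP := terms0 i ir.
  by rewrite mulf_eq0 (negPf (lam_neq0 i ir)) subr_eq0 => /eqP.
by apply: x_nonconst => i j ir jr; rewrite !x_eq_m.
Qed.

Lemma divr_gt0_scaled (R : numFieldType) (s x y : R) :
  0 < s * x -> 0 < s * y -> 0 < x / y.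
Proof.
move=> sx sy; have s_neq0 : s != 0 by apply: contraTneq sx => ->; rewrite mul0r ltxx.
have -> : x / y = (s * x) / (s * y) by rewrite invfM mulrACA divff // mul1r.
exact: divr_gt0.
Qed.

Lemma ratio_gt0 (R : realFieldType) (a b c : R) :
  a < Num.min b c \/ Num.max b c < a -> 0 < (b - a) / (c - a).
Proof.
case; rewrite ?lt_min ?gt_max => /andP[ba ca]; last rewrite -divrNN !opprB.
all: by rewrite divr_gt0 ?subr_gt0.
Qed.

Lemma sumr_ln_div_eq0 (R : realType) (I : eqType) (r : seq I) (F G : I -> R) :
  {in r, forall i, 0 < F i / G i} -> \prod_(i <- r) F i = \prod_(i <- r) G i ->
  \sum_(i <- r) ln (F i / G i) = 0.
Proof.
move=> FG_gt0 prodFG; apply: expR_inj; rewrite expR0 expR_sum big_seq.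
rewrite (eq_bigr (fun i => F i / G i)) => [|i ir]; last by rewrite lnK ?posrE ?FG_gt0.
have G_neq0 : {in r, forall i, G i != 0}.
  by move=> i /FG_gt0; apply: contraTneq => ->; rewrite invr0 mulr0 ltxx.
rewrite -big_seq prodf_div prodFG divff // prodf_seq_neq0.
by apply/allP => i ir; rewrite G_neq0.
Qed.

Lemma subr_mul_ln_gt0 (R : realType) (x y : R) :
  0 < x -> 0 < y -> x != y -> 0 < (x - y) * (ln x - ln y).
Proof.
move=> x_gt0 y_gt0; rewrite neq_lt => /orP[xy|yx].
- by rewrite nmulr_rgt0 ?subr_lt0 ?ltr_ln ?posrE.
- by rewrite pmulr_rgt0 ?subr_gt0 ?ltr_ln ?posrE.
Qed.

Lemma ln_ratio_weight_gt0 (R : realType) (a b c : R) :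
  b != c -> Num.max b c < a -> 0 < (c - b) * ln ((b - a) / (c - a)).
Proof.
move=> bc; rewrite gt_max => /andP[ba ca].
rewrite -divrNN !opprB ln_div ?posrE ?subr_gt0 //.
have -> : c - b = (a - b) - (a - c) by ring.
apply: subr_mul_ln_gt0; rewrite ?subr_gt0 //.
by apply: contra bc => /eqP/addrI/oppr_inj ->.
Qed.

Lemma ln_ratio_weight_lt0 (R : realType) (a b c : R) :
  b != c -> a < Num.min b c -> (c - b) * ln ((b - a) / (c - a)) < 0.
Proof.
move=> bc; rewrite lt_min => /andP[ab ac].
rewrite ln_div ?posrE ?subr_gt0 //.
have -> : c - b = - ((b - a) - (c - a)) by ring.
rewrite mulNr oppr_lt0; apply: subr_mul_ln_gt0; rewrite ?subr_gt0 //.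
by apply: contra bc => /eqP/addIr ->.
Qed.

Lemma sum_traj_weight_gt0 (R : realFieldType) (n : nat) (lam : nat -> R)
    (d t : nat -> int) (c0 : int) :
  \sum_(1 <= j < n.+1) lam j = 0 ->
  (forall j, (1 <= j <= n)%N -> lam j != 0) ->
  (forall i j, (1 <= i <= n)%N -> (1 <= j <= n)%N ->
     0 < lam i -> lam j < 0 -> d i <= d j) ->
  ~ (forall i, (1 <= i <= n)%N -> d i = d 1%N) ->
  (forall i, (1 <= i <= n)%N -> t i * n%:Z = d 1%N - d i + c0 * n%:Z) ->
  0 < \sum_(1 <= j < n.+1) (t j)%:~R * lam j.
Proof.
move=> lam_sum0 lam_neq0 d_sorted d_nonconst t_def.
have n_gt0 : (0 < n)%N.
  by rewrite lt0n; apply/eqP => n0; apply: d_nonconst => i; rewrite n0; lia.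
have sum_lam_d : \sum_(1 <= j < n.+1) lam j * (d j)%:~R < 0.
  apply: sumr_sorted_lt0 => // [j|i j|d_const]; rewrite ?mem_index_iota.
  - exact: lam_neq0.
  - by move=> ir jr li lj; rewrite ler_int; exact: d_sorted.
  - apply: d_nonconst => i ir; apply: (@intr_inj R).
    by apply: d_const; rewrite mem_index_iota.
have scaled : (\sum_(1 <= j < n.+1) (t j)%:~R * lam j) * n%:R =
              - \sum_(1 <= j < n.+1) lam j * (d j)%:~R.
  rewrite mulr_suml.
  transitivity (\sum_(1 <= j < n.+1)
                 ((d 1%N + c0 * n%:Z)%:~R * lam j - lam j * (d j)%:~R)).
    apply: eq_big_nat => j jn.
    rewrite mulrAC -[n%:R]/((n%:Z)%:~R) -intrM t_def // !(intrD, intrB, intrM).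
    ring.
  by rewrite sumrB -mulr_sumr lam_sum0 mulr0 sub0r.
have n_pos : (0 : R) < n%:R by rewrite ltr0n.
by rewrite -(pmulr_lgt0 _ n_pos) scaled oppr_gt0.
Qed.

Lemma sum_traj_ln_gt0 (R : realType) (n : nat) (alpha : nat -> R) (b c : R)
    (d t : nat -> int) (c0 : int) :
  b != c ->
  (forall j, (1 <= j <= n)%N -> alpha j < Num.min b c \/ Num.max b c < alpha j) ->
  \prod_(1 <= j < n.+1) (b - alpha j) = \prod_(1 <= j < n.+1) (c - alpha j) ->
  (forall i j, (1 <= i <= n)%N -> (1 <= j <= n)%N ->
     d j < d i -> alpha i < alpha j) ->
  ~ (forall i, (1 <= i <= n)%N -> d i = d 1%N) ->
  (forall i, (1 <= i <= n)%N -> t i * n%:Z = d 1%N - d i + c0 * n%:Z) ->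
  0 < (c - b) * \sum_(1 <= j < n.+1) (t j)%:~R * ln ((b - alpha j) / (c - alpha j)).
Proof.
move=> bc alpha_out prod_eq d_alpha d_nonconst t_def.
pose lam j := (c - b) * ln ((b - alpha j) / (c - alpha j)).
have lam_pos j : (1 <= j <= n)%N -> 0 < lam j -> Num.max b c < alpha j.
  by case/alpha_out => // /(ln_ratio_weight_lt0 bc) /lt_trans h /h; rewrite ltxx.
have lam_neg j : (1 <= j <= n)%N -> lam j < 0 -> alpha j < Num.min b c.
  by case/alpha_out => // /(ln_ratio_weight_gt0 bc) h /(lt_trans h); rewrite ltxx.
rewrite mulr_sumr (eq_bigr (fun j => (t j)%:~R * lam j)) => [|j _]; last exact: mulrCA.
apply: (sum_traj_weight_gt0 _ _ _ d_nonconst t_def).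
- rewrite -mulr_sumr sumr_ln_div_eq0 ?mulr0 // => j.
  by rewrite mem_index_iota => /alpha_out/ratio_gt0.
- move=> j /alpha_out [/(ln_ratio_weight_lt0 bc)|/(ln_ratio_weight_gt0 bc)].
  + exact: ltr0_neq0.
  + exact: lt0r_neq0.
- move=> i j hi hj /(lam_pos i hi) ai /(lam_neg j hj) aj.
  rewrite leNgt; apply/negP => /(d_alpha _ _ hi hj); apply/negP; rewrite -leNgt.
  by rewrite ltW // (lt_trans aj) // (le_lt_trans _ ai) // ge_min le_max lexx.
Qed.

Lemma eqz_modP (m a b : int) : reflect (exists q, a = b + q * m) (a == b %[mod m])%Z.
Proof. by rewrite eqz_mod_dvd; apply: (iffP dvdzP) => -[q h]; exists q; lia. Qed.

Lemma small_multiple_eq0 (q : int) (n : nat) :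
  - n%:Z < q * n%:Z < n%:Z -> q * n%:Z = 0.
Proof. by case: (ltgtP q 0) => [q_lt0|q_gt0|->]; [nia|nia|rewrite mul0r]. Qed.

Section Wiring.
Variable n : nat.

Lemma tau_periodic (a p q : int) : tau n a (p + q * n%:Z) = tau n a p + q * n%:Z.
Proof.
have cong b : (p + q * n%:Z == b %[mod n%:Z])%Z = (p == b %[mod n%:Z])%Z.
  by apply/eqz_modP/eqz_modP => -[r hr]; [exists (r - q) | exists (r + q)]; lia.
by rewrite /tau !cong; case: ifP => _; [lia | case: ifP => _; lia].
Qed.

Lemma tau_shift (a k p : int) : tau n (a - k) p = tau n a (p + k) - k.
Proof.
have cong b : (p == b - k %[mod n%:Z])%Z = (p + k == b %[mod n%:Z])%Z.
  by apply/eqz_modP/eqz_modP => -[r hr]; exists r; lia.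
by rewrite /tau -addrAC !cong; case: ifP => _; [lia | case: ifP => _; lia].
Qed.

Lemma tau_lower (a : int) : tau n a a = a + 1.
Proof. by rewrite /tau eqxx. Qed.

Lemma tau_inversion (a p q : int) : p < q -> tau n a q < tau n a p ->
  q = p + 1 /\ (p = a %[mod n%:Z])%Z.
Proof.
move=> pq; rewrite /tau.
case: (eqz_modP n%:Z p a) => [[m hm]|hm].
  have p_a : (p = a %[mod n%:Z])%Z by apply/eqP/eqz_modP; exists m.
  case: (eqz_modP n%:Z q a) => [[m' hm']|_]; first lia.
  case: (eqz_modP n%:Z q (a + 1)) => [_|hq]; first by split=> //; lia.
  by move=> qp; case: hq; exists m; lia.
case: (eqz_modP n%:Z p (a + 1)) => [[m hm1]|_];
  case: (eqz_modP n%:Z q a) => [[m' hm']|_]; try lia;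
  case: (eqz_modP n%:Z q (a + 1)) => [[m' hm'']|_]; lia.
Qed.

Lemma phi_cat (w1 w2 : seq int) p : phi n (w1 ++ w2) p = phi n w1 (phi n w2 p).
Proof. by elim: w1 => //= a w1 ->. Qed.

Lemma phi_periodic (w : seq int) (p q : int) :
  phi n w (p + q * n%:Z) = phi n w p + q * n%:Z.
Proof. by elim: w => //= a w ->; rewrite tau_periodic. Qed.

Lemma phi_shift (w : seq int) (k p : int) :
  phi n [seq j - k | j <- w] p = phi n w (p + k) - k.
Proof. by elim: w => /= [|a w ->]; [rewrite addrK | rewrite tau_shift subrK]. Qed.

(* [phi n (rev w)], the inverse of [phi n w], sends the starting position of a
   wire to its final position. *)
Definition disp (w : seq int) (x : int) : int := phi n (rev w) x - x.

Lemma disp_mod (w : seq int) (x y : int) :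
  (x = y %[mod n%:Z])%Z -> disp w x = disp w y.
Proof. by move/eqP/eqz_modP => [q ->]; rewrite /disp phi_periodic; lia. Qed.

Lemma disp_shift (w : seq int) (k x : int) :
  disp [seq j - k | j <- w] x = disp w (x + k).
Proof. by rewrite /disp -map_rev phi_shift; set P := phi _ _ _; lia. Qed.

Lemma glide_shift (w : seq int) (k : int) :
  is_glide n w k -> is_glide n [seq j - k | j <- w] k.
Proof.
move=> glide j; have /eqP/eqz_modP [q hq] := glide (j + k).
by apply/eqP/eqz_modP; exists q; rewrite phi_shift; lia.
Qed.

Hypothesis n_gt1 : (1 < n)%N.

Lemma tau_upper (a : int) : tau n a (a + 1) = a.
Proof.
rewrite /tau eqxx; case: (eqz_modP n%:Z (a + 1) a) => [[q hq]|_]; last by rewrite addrK.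
by have := @small_multiple_eq0 q n; lia.
Qed.

Lemma tauK (a : int) : involutive (tau n a).
Proof.
move=> p; rewrite /tau.
case: (eqz_modP n%:Z p a) => [[q hq]|hq].
  case: (eqz_modP n%:Z (p + 1) a) => [[q' hq']|_].
    by have := @small_multiple_eq0 (q' - q) n; lia.
  by case: (eqz_modP n%:Z (p + 1) (a + 1)) => [_|[]]; [rewrite addrK | exists q; lia].
case: (eqz_modP n%:Z p (a + 1)) => [[q hq1]|hq1].
  by case: (eqz_modP n%:Z (p - 1) a) => [_|[]]; [rewrite subrK | exists q; lia].
by case: (eqz_modP n%:Z p a) => [//|_]; case: (eqz_modP n%:Z p (a + 1)).
Qed.

Lemma phi_revK (w : seq int) : cancel (phi n w) (phi n (rev w)).
Proof. by elim: w => //= a w IH p; rewrite rev_cons -cats1 phi_cat /= tauK IH. Qed.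

Lemma phi_Krev (w : seq int) : cancel (phi n (rev w)) (phi n w).
Proof. by move=> p; rewrite -{1}(revK w) phi_revK. Qed.

Lemma disp_glide (w : seq int) (k x : int) :
  is_glide n w k -> (disp w x = - k %[mod n%:Z])%Z.
Proof.
move=> /(_ (phi n (rev w) x)); rewrite phi_Krev => /eqP/eqz_modP [q hq].
by apply/eqP/eqz_modP; exists (- q); rewrite /disp; lia.
Qed.

Lemma disp_gap (w : seq int) (k x y : int) : is_glide n w k ->
  disp w x < disp w y -> disp w x + n%:Z <= disp w y.
Proof.
move=> glide.
have /eqP/eqz_modP [q ->] := disp_glide x glide.
have /eqP/eqz_modP [q' ->] := disp_glide y glide.
have n_gt0 : 0 < n%:Z by lia.
by rewrite ltrD2l ltr_pM2r // => ?; nia.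
Qed.

Lemma exists_mod_rep (x : int) :
  exists2 i : nat, (1 <= i <= n)%N & (x = i%:Z %[mod n%:Z])%Z.
Proof.
have n_neq0 : n%:Z != 0 by lia.
have := modz_ge0 (x - 1) n_neq0; have := ltz_mod (x - 1) n_neq0.
exists (absz ((x - 1) %% n%:Z)%Z).+1; first lia.
have -> : ((absz ((x - 1) %% n%:Z)%Z).+1 : int) = ((x - 1) %% n%:Z)%Z + 1 by lia.
by rewrite modzDml subrK.
Qed.

Lemma lift_between (i j : nat) : (1 <= i <= n)%N -> (1 <= j <= n)%N -> i != j ->
  exists y : int, [/\ (y = j%:Z %[mod n%:Z])%Z, i%:Z < y & y < i%:Z + n%:Z].
Proof.
move=> hi hj; rewrite neq_ltn => /orP[ij|ji].
- by exists j%:Z; split=> //; lia.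
- by exists (j%:Z + n%:Z); split; [rewrite modzDr | lia | lia].
Qed.

Lemma disp_const (w : seq int) :
  (forall i, (1 <= i <= n)%N -> disp w i%:Z = disp w 1) ->
  forall x, disp w x = disp w 1.
Proof.
by move=> const x; have [i hi /disp_mod ->] := exists_mod_rep x; apply: const.
Qed.

Lemma ceil_divDM (M r : int) : ceil_div (M + r * n%:Z) n = ceil_div M n + r.
Proof.
rewrite /ceil_div opprD -mulNr addrC divzMDl; last by rewrite eqz_nat; lia.
by rewrite opprD opprK addrC.
Qed.

Lemma chamber_label_max (S g : int -> int) (e : int) (L : nat -> int) (i : nat)
    (M : int) :
  cancel S g -> cancel g S -> chamber_label n S e L -> (1 <= i <= n)%N ->
  (M = i%:Z %[mod n%:Z])%Z -> g M <= e ->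
  (forall x, (x = i%:Z %[mod n%:Z])%Z -> g x <= e -> x <= M) ->
  L i = ceil_div M n.
Proof.
move=> SK gK label hi M_i M_below M_max.
have [M' [[p [p_le <-]] [M'_i [M'_max ->]]]] := label i hi.
congr ceil_div; apply: le_anti; rewrite M_max ?SK //=.
by rewrite -[M]gK M'_max // gK.
Qed.

(* The chamber maximum at the right end is the one at the left end shifted
   by [disp w 1 - disp w i], a multiple of [n]. *)
Lemma traj_rep_glide (w : seq int) (k : int) (t : nat -> int) :
  is_glide n w k -> traj_rep n w t ->
  exists c : int, forall i : nat, (1 <= i <= n)%N ->
    t i * n%:Z = disp w 1 - disp w i%:Z + c * n%:Z.
Proof.
move=> glide [e [Lr [Ll [c [e_1 [label_r [label_l t_def]]]]]]].
exists c => i hi.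
have e_def : e = phi n (rev w) 1 by rewrite -e_1 phi_revK.
have [r r_def] : exists r : int, disp w 1 - disp w i%:Z = r * n%:Z.
  have /eqP/eqz_modP [q1 h1] := disp_glide 1 glide.
  have /eqP/eqz_modP [q2 h2] := disp_glide i%:Z glide.
  by exists (q1 - q2); lia.
have [M [[p [p_le <-]] [M_i [M_max Ll_i]]]] := label_l i hi.
have disp_i x : (x = i%:Z %[mod n%:Z])%Z -> phi n (rev w) x = x + disp w i%:Z.
  by move/(disp_mod w) <-; rewrite /disp; lia.
have pr_i : (p + r * n%:Z = i%:Z %[mod n%:Z])%Z by rewrite addrC modzMDl.
rewrite t_def // Ll_i (chamber_label_max (M := p + r * n%:Z) (phi_revK w)
                                         (phi_Krev w) label_r hi) //.
- rewrite ceil_divDM.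
  have -> : ceil_div p n + r - ceil_div p n + c = r + c by lia.
  by rewrite mulrDl -r_def.
- by rewrite disp_i // e_def; rewrite /disp in r_def *; lia.
- move=> x x_i; rewrite disp_i // e_def => x_le.
  have x_r : (x - r * n%:Z = i%:Z %[mod n%:Z])%Z by rewrite -mulNr addrC modzMDl.
  suff : x - r * n%:Z <= p by lia.
  by apply: M_max x_r; rewrite /disp in r_def x_le; lia.
Qed.

Section Crossing.
Variables (R : numDomainType) (alpha : nat -> R) (v u : seq int).
Hypothesis alpha_tri : forall i j : nat, (1 <= i <= n)%N -> (1 <= j <= n)%N ->
  tri n v u i%:Z j%:Z -> alpha i < alpha j.

(* The position, after the first [t] letters of [v ++ u], of the wire starting
   at position [x]. *)
Let pos (t : nat) (x : int) : int := phi n (rev (take t (v ++ u))) x.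

Let pos0 x : pos 0 x = x.
Proof. by rewrite /pos take0. Qed.

Let pos_cut x : pos (size v) x = phi n (rev v) x.
Proof. by rewrite /pos take_size_cat. Qed.

Let pos_end x : pos (size (v ++ u)) x = phi n (rev u) (phi n (rev v) x).
Proof. by rewrite /pos take_size rev_cat phi_cat. Qed.

Let posS t x : (t < size (v ++ u))%N ->
  pos t.+1 x = tau n (nth 0 (v ++ u) t) (pos t x).
Proof. by move=> t_lt; rewrite /pos (take_nth 0 t_lt) rev_rcons. Qed.

Let pos_inj t : injective (pos t).
Proof. exact: can_inj (phi_Krev _). Qed.

Let pos_wire t p : pos t (phi n (take t (v ++ u)) p) = p.
Proof. exact: phi_revK. Qed.

Lemma alpha_lt_of_swap t x y i j :
  (t < size (v ++ u))%N -> pos t x < pos t y -> pos t.+1 y < pos t.+1 x ->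
  (1 <= i <= n)%N -> (1 <= j <= n)%N ->
  (pos (size v) x = i%:Z %[mod n%:Z])%Z -> (pos (size v) y = j%:Z %[mod n%:Z])%Z ->
  alpha i < alpha j.
Proof.
move=> t_lt xy; rewrite !posS // => /(tau_inversion xy) [y_def x_letter].
move=> hi hj x_i y_j; apply: alpha_tri hi hj _.
exists t; split=> //; exists (pos t x); split=> //.
by rewrite -y_def !phi_Krev -!pos_cut.
Qed.

Lemma alpha_lt_of_cross t1 t2 x y i j :
  (t1 <= t2 <= size (v ++ u))%N -> pos t1 x < pos t1 y -> pos t2 y < pos t2 x ->
  (1 <= i <= n)%N -> (1 <= j <= n)%N ->
  (pos (size v) x = i%:Z %[mod n%:Z])%Z -> (pos (size v) y = j%:Z %[mod n%:Z])%Z ->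
  alpha i < alpha j.
Proof.
move=> /andP[+ t2_le] xy1; elim: t2 t2_le => [|t2 IH] t2_le t12 yx2.
  move: t12; rewrite leqn0 => /eqP t1_0; rewrite t1_0 in xy1.
  by have := lt_trans xy1 yx2; rewrite ltxx.
move: t12; rewrite leq_eqVlt => /orP[/eqP t1_eq | t12].
  by rewrite t1_eq in xy1; have := lt_trans xy1 yx2; rewrite ltxx.
have [xy|yx|/pos_inj eq_xy] := ltgtP (pos t2 x) (pos t2 y).
- exact: alpha_lt_of_swap xy yx2.
- exact: IH (ltnW t2_le) t12 yx.
- by move: yx2; rewrite eq_xy ltxx.
Qed.

Lemma no_recross t1 t2 t3 x y :
  (t1 <= t2 <= t3)%N -> (t3 <= size (v ++ u))%N ->
  pos t1 x < pos t1 y -> pos t2 y < pos t2 x -> ~ pos t3 x < pos t3 y.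
Proof.
move=> /andP[t12 t23] t3_le xy1 yx2 xy3.
have [i hi x_i] := exists_mod_rep (pos (size v) x).
have [j hj y_j] := exists_mod_rep (pos (size v) y).
have ij : alpha i < alpha j.
  by apply: alpha_lt_of_cross xy1 yx2 hi hj x_i y_j; rewrite t12 (leq_trans t23).
have ji : alpha j < alpha i.
  by apply: alpha_lt_of_cross yx2 xy3 hj hi y_j x_i; rewrite t23.
by have := lt_trans ij ji; rewrite ltxx.
Qed.

(* The letter at [t1] swaps the wires in positions [a] and [a + 1]; a
   translation would put them back in order, so they would cross twice. *)
Lemma pos_not_translation t1 t2 (D : int) :
  (t1 < t2 <= size (v ++ u))%N -> ~ (forall x, pos t2 x = pos t1 x + D).
Proof.
move=> /andP[t12 t2_le] transl.
have t1_lt : (t1 < size (v ++ u))%N := leq_trans t12 t2_le.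
set a := nth 0 (v ++ u) t1.
apply: (@no_recross t1 t1.+1 t2 (phi n (take t1 (v ++ u)) a)
                    (phi n (take t1 (v ++ u)) (a + 1))) => //.
- by rewrite leqnSn t12.
- by rewrite !pos_wire ltrDl.
- by rewrite !posS // !pos_wire tau_lower tau_upper ltrDl.
- by rewrite !transl !pos_wire ltrD2r ltrDl.
Qed.

Lemma disp_order_u (k : int) : is_glide n u k -> forall i j : nat,
  (1 <= i <= n)%N -> (1 <= j <= n)%N -> disp u j%:Z < disp u i%:Z ->
  alpha i < alpha j.
Proof.
move=> glide i j hi hj dji.
have gap := disp_gap glide dji.
have [|y [y_j iy y_lt]] := lift_between hi hj.
  by apply: contraTneq dji => ->; rewrite ltxx.
have cut z : pos (size v) (phi n v z) = z by rewrite pos_cut phi_revK.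
apply: (@alpha_lt_of_cross (size v) (size (v ++ u)) (phi n v i%:Z) (phi n v y)) => //.
- by rewrite size_cat leq_addr leqnn.
- by rewrite !cut.
- by rewrite !pos_end !phi_revK; move: (disp_mod u y_j) gap; rewrite /disp; lia.
all: by rewrite cut.
Qed.

Lemma disp_order_v (k : int) : is_glide n v k -> forall i j : nat,
  (1 <= i <= n)%N -> (1 <= j <= n)%N ->
  disp [seq l - k | l <- v] j%:Z < disp [seq l - k | l <- v] i%:Z ->
  alpha i < alpha j.
Proof.
move=> glide i j hi hj dji.
have glide' := glide_shift glide.
have gap := disp_gap glide' dji.
have [|y [y_j iy y_lt]] := lift_between hi hj.
  by apply: contraTneq dji => ->; rewrite ltxx.
have cut z : pos (size v) (z + k) = z + k + disp [seq l - k | l <- v] z.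
  by rewrite pos_cut disp_shift /disp; lia.
have cut_mod z : (pos (size v) (z + k) = z %[mod n%:Z])%Z.
  rewrite cut; have /eqP/eqz_modP [q ->] := disp_glide z glide'.
  by rewrite addrA addrK addrC modzMDl.
apply: (@alpha_lt_of_cross 0 (size v) (i%:Z + k) (y + k)) => //.
- by rewrite size_cat leq_addr.
- by rewrite !pos0 ltrD2r.
- by rewrite !cut (disp_mod _ y_j); lia.
- by rewrite cut_mod.
Qed.

Lemma disp_nonconst_u : u != [::] ->
  ~ (forall i, (1 <= i <= n)%N -> disp u i%:Z = disp u 1).
Proof.
move=> u_nil /disp_const const.
apply: (@pos_not_translation (size v) (size (v ++ u)) (disp u 1)) => [|x].
- by rewrite size_cat leqnn andbT -[X in (X < _)%N]addn0 ltn_add2l lt0n size_eq0.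
- by rewrite pos_end pos_cut -(const (phi n (rev v) x)) /disp; lia.
Qed.

Lemma disp_nonconst_v (k : int) : v != [::] ->
  ~ (forall i, (1 <= i <= n)%N ->
       disp [seq l - k | l <- v] i%:Z = disp [seq l - k | l <- v] 1).
Proof.
move=> v_nil /disp_const const.
apply: (@pos_not_translation 0 (size v) (disp [seq l - k | l <- v] 1)) => [|x].
- by rewrite lt0n size_eq0 v_nil size_cat leq_addr.
- by rewrite pos_cut pos0 -(const (x - k)) disp_shift subrK /disp; lia.
Qed.

End Crossing.
End Wiring.

Theorem proposition8p5 (R : realType) (n : nat) (u v : seq int) (k2 : int)
    (alpha : nat -> R) (t t' : nat -> int) (b c : R) :
  (2 < n)%N ->
  u != [::] -> v != [::] ->
  reduced n u -> reduced n v ->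
  (exists k1 : int, is_glide n u k1) -> is_glide n v k2 ->
  reduced n (v ++ u) ->
  (forall i j : nat, (1 <= i <= n)%N -> (1 <= j <= n)%N ->
     tri n v u i%:Z j%:Z -> alpha i < alpha j) ->
  traj_rep n u t ->
  traj_rep n [seq j - k2 | j <- v] t' ->
  b != c ->
  (forall j : nat, (1 <= j <= n)%N ->
     ~ (Num.min b c <= alpha j <= Num.max b c)) ->
  \prod_(1 <= j < n.+1) (b - alpha j) = \prod_(1 <= j < n.+1) (c - alpha j) ->
  let B := fun j : nat => (b - alpha j) / (c - alpha j) in
  0 < (\sum_(1 <= j < n.+1) (t' j)%:~R * ln (B j)) /
      (\sum_(1 <= j < n.+1) (t j)%:~R * ln (B j)).
Proof.
move=> n_gt2 u_nil v_nil _ _ [k1 u_glide] v_glide _ alpha_tri u_traj v_traj.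
move=> bc alpha_in prod_eq /=.
have n_gt1 : (1 < n)%N := ltnW n_gt2.
have alpha_out j : (1 <= j <= n)%N -> alpha j < Num.min b c \/ Num.max b c < alpha j.
  by move/alpha_in/negP; rewrite negb_and -!ltNge => /orP.
have [c1 t_def] := traj_rep_glide n_gt1 u_glide u_traj.
have [c2 t'_def] := traj_rep_glide n_gt1 (glide_shift v_glide) v_traj.
apply: (@divr_gt0_scaled _ (c - b)).
- exact: sum_traj_ln_gt0 bc alpha_out prod_eq (disp_order_v n_gt1 alpha_tri v_glide)
           (disp_nonconst_v n_gt1 alpha_tri v_nil) t'_def.
- exact: sum_traj_ln_gt0 bc alpha_out prod_eq (disp_order_u n_gt1 alpha_tri u_glide)
           (disp_nonconst_u n_gt1 alpha_tri u_nil) t_def.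
Qed.
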